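(* Let $\chi\in\chi(G)$ be a character and $\lambda\in\Lambda^\chi$. Let $\mathcal M=\{i\in[n]:\langle\chi_i,\lambda\rangle\ge0\}$, and let $A_1,\dots,A_N$ be the subsets of $[n]$ that are minimal with respect to the property $L(A_j)\subset S^\chi_\lambda$. Then $$S^\chi_\lambda=V([n]\setminus\mathcal M)\cap\Big(\bigcup_{j=1}^N D(A_j)\Big)=X_\lambda\cap\Big(\bigcup_{j=1}^ND(A_j)\Big).$$ In particular $S^\chi_\lambda$ is an open subvariety of $X_\lambda$, irreducible, connected and smooth; it is obtained by removing a finite union of linear subspaces from $X_\lambda$, and its Zariski closure is the linear subspace $X_\lambda$.
   Context: $G$ is a diagonalizable algebraic group over $\mathbf C$ acting on $X=\mathbf A^n_{\mathbf C}$ by $g\cdot(x_1,\dots,x_n)=(\chi_1(g)x_1,\dots,\chi_n(g)x_n)$ for fixed characters $\chi_1,\dots,\chi_n$. $\chi(G)$ is the character group, $\Gamma(G)$ the group of one-parameter subgroups, $\langle\chi,\lambda\rangle$ defined by $\chi(\lambda(t))=t^{\langle\chi,\lambda\rangle}$ (extended to real scalars). A norm $\|\cdot\|$ on $\Gamma(G)$ is fixed, induced by an inner product on $\Gamma(G)_{\mathbf R}$ integral on $\Gamma(G)\times\Gamma(G)$. $[n]=\{1,\dots,n\}$. For $x\in X$, $S_x=\{i:x_i\ne0\}$ and $\sigma_x=\{v\in\Gamma(G)_{\mathbf R}:\langle\chi_i,v\rangle\ge0\ \forall i\in S_x\}$; the lattice points of $\sigma_x$ are exactly the $\lambda$ for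 which $\lim_{t\to0}\lambda(t)\cdot x$ exists. $X_\lambda=\{x:\lim_{t\to0}\lambda(t)x\text{ exists}\}=\{x:x_i=0\text{ whenever }\langle\chi_i,\lambda\rangle<0\}$. A point $x$ is $\chi$-unstable if there is $\lambda\in\Gamma(G)$ with $\lim_{t\to0}\lambda(t)x$ existing and $\langle\chi,\lambda\rangle<0$; $X^{us}(\chi)$ is the unstable locus. For $x\in X^{us}(\chi)$ let $\lambda_{\chi,x}$ be the unique indivisible $\lambda\in\Gamma(G)$ with limit existing minimizing $\langle\chi,\lambda\rangle/\|\lambda\|$ over all nonzero such $\lambda$ (Kempf). $\Lambda^\chi=\{\lambda_{\chi,x}:x\in X^{us}(\chi)\}$, $S^\chi_\lambda=\{x\in X^{us}(\chi):\lambda_{\chi,x}=\lambda\}$. For $S\subset[n]$: $V(S)=\{x:x_i=0\ \forall i\in S\}$, $D(S)=\{x:\prod_{i\in S}x_i\ne0\}$, $L(S)=D(S)\cap V([n]\setminus S)$. *)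

(* Combinatorial model of a diagonalizable group acting
   diagonally on affine space. *)
From HB Require Import structures.
From mathcomp Require Import all_boot all_order all_algebra.
From mathcomp Require Import mpoly.
Set Implicit Arguments. Unset Strict Implicit. Unset Printing Implicit Defensive.
Import Order.TTheory GRing.Theory Num.Theory.
Local Open Scope ring_scope.

(* Gamma(G) = Z^r (row vectors); a character is identified with the linear
   form it induces on Gamma(G), also an element of Z^r. *)

Definition pairing (r : nat) (a l : 'rV[int]_r) : int :=
  \sum_(k < r) a 0 k * l 0 k.

Definition qform (r : nat) (Q : 'M[int]_r) (l : 'rV[int]_r) : int :=
  \sum_(i < r) \sum_(j < r) l 0 i * Q i j * l 0 j.

(* Q is the Gram matrix (in a basis of Gamma(G)) of an inner product on
   Gamma(G)_R which is integral on Gamma(G) x Gamma(G) *)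
Definition integral_inner_product (r : nat) (Q : 'M[int]_r) : Prop :=
  Q^T = Q /\ forall l : 'rV[int]_r, l != 0 -> 0 < qform Q l.

Definition gnorm (C : numClosedFieldType) (r : nat) (Q : 'M[int]_r)
  (l : 'rV[int]_r) : C := sqrtC ((qform Q l)%:~R).

(* lambda is indivisible: not a multiple k*mu with k <> 1 (in particular nonzero) *)
Definition indivisible (r : nat) (l : 'rV[int]_r) : Prop :=
  forall (k : nat) (mu : 'rV[int]_r), l = k%:Z *: mu -> k = 1%N.

(* X_lambda = points x for which lim_{t->0} lambda(t).x exists *)
Definition Xlam (C : numClosedFieldType) (n r : nat) (chis : 'I_n -> 'rV[int]_r)
  (l : 'rV[int]_r) (x : 'I_n -> C) : Prop :=
  forall i : 'I_n, pairing (chis i) l < 0 -> x i = 0.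

Definition unstable (C : numClosedFieldType) (n r : nat) (chis : 'I_n -> 'rV[int]_r)
  (chi : 'rV[int]_r) (x : 'I_n -> C) : Prop :=
  exists l : 'rV[int]_r, Xlam chis l x /\ pairing chi l < 0.

Definition kratio (C : numClosedFieldType) (r : nat) (Q : 'M[int]_r)
  (chi l : 'rV[int]_r) : C := (pairing chi l)%:~R / gnorm C Q l.

Definition is_kempf (C : numClosedFieldType) (n r : nat) (chis : 'I_n -> 'rV[int]_r)
  (Q : 'M[int]_r) (chi : 'rV[int]_r) (x : 'I_n -> C) (l : 'rV[int]_r) : Prop :=
  [/\ indivisible l, Xlam chis l x &
      forall mu : 'rV[int]_r, mu != 0 -> Xlam chis mu x ->
        kratio C Q chi l <= kratio C Q chi mu].

Definition Sstrat (C : numClosedFieldType) (n r : nat) (chis : 'I_n -> 'rV[int]_r)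
  (Q : 'M[int]_r) (chi l : 'rV[int]_r) (x : 'I_n -> C) : Prop :=
  unstable chis chi x /\ is_kempf chis Q chi x l.

Definition Lambda_set (C : numClosedFieldType) (n r : nat) (chis : 'I_n -> 'rV[int]_r)
  (Q : 'M[int]_r) (chi l : 'rV[int]_r) : Prop :=
  exists x : 'I_n -> C, Sstrat chis Q chi l x.

Definition Vset (C : numClosedFieldType) (n : nat) (S : {set 'I_n}) (x : 'I_n -> C) : Prop :=
  forall i, i \in S -> x i = 0.
Definition Dset (C : numClosedFieldType) (n : nat) (S : {set 'I_n}) (x : 'I_n -> C) : Prop :=
  \prod_(i in S) x i != 0.
Definition Lset (C : numClosedFieldType) (n : nat) (S : {set 'I_n}) (x : 'I_n -> C) : Prop :=
  Dset S x /\ Vset (~: S) x.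

Definition minimal_L (C : numClosedFieldType) (n r : nat) (chis : 'I_n -> 'rV[int]_r)
  (Q : 'M[int]_r) (chi l : 'rV[int]_r) (A : {set 'I_n}) : Prop :=
  (forall x : 'I_n -> C, Lset A x -> Sstrat chis Q chi l x) /\
  forall B : {set 'I_n}, B \proper A ->
    ~ (forall x : 'I_n -> C, Lset B x -> Sstrat chis Q chi l x).

Definition Mset (n r : nat) (chis : 'I_n -> 'rV[int]_r) (l : 'rV[int]_r) : {set 'I_n} :=
  [set i | 0 <= pairing (chis i) l].

(* Once x lies in X_lambda, whether it lies in S^chi_lambda depends only on
   its support, monotonically: enlarging the support only removes candidate
   one-parameter subgroups mu (those with lim mu(t) x existing), so the Kempf
   minimizer lambda of a smaller-support point stays the minimizer.  Hence
   S^chi_lambda is the union over minimal A of the points of X_lambda whose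
   support contains A.  For the closure, restrict a polynomial vanishing on
   S^chi_lambda to the line x + t 1_T through any x in X_lambda, where T is the
   support of a point of S^chi_lambda: off finitely many t that line lies in
   S^chi_lambda, so the restriction is the zero polynomial. *)
From Pilot Require Import Defs.
From mathcomp Require Import all_boot all_order all_algebra.
From mathcomp Require Import mpoly boolp.
Set Implicit Arguments. Unset Strict Implicit.
Import Order.TTheory GRing.Theory Num.Theory.
Local Open Scope ring_scope.

Lemma ex_minimal_set (T : finType) (P : {set T} -> Prop) (A0 : {set T}) :
  P A0 -> exists2 A : {set T}, A \subset A0 &
    P A /\ forall B : {set T}, B \proper A -> ~ P B.
Proof.
move=> PA0; have [A /minsetP[/asboolP PA minA] sAA0] :=
  @minset_exists T (fun A : {set T} => `[< P A >]) A0 (asboolT PA0).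
exists A => //; split=> // B /properP[sBA [i iA iNB]] PB.
by move: iNB; rewrite (minA B _ sBA) ?iA //; apply/asboolP.
Qed.

Lemma vanishing_poly_eq0 (R : numDomainType) (p : {poly R}) :
  (forall t, p.[t] = 0) -> p = 0.
Proof.
move=> p0; apply/eqP; apply: contraT => /max_poly_roots.
move=> /(_ [seq k%:R | k <- iota 0 (size p)]).
rewrite size_map size_iota ltnn; apply.
  by apply/allP => _ /mapP[k _ ->]; apply/rootP.
by rewrite map_inj_uniq ?iota_uniq // => i j /eqP; rewrite eqr_nat => /eqP.
Qed.

Lemma meval_line (R : comNzRingType) (n : nat) (p : {mpoly R[n]})
  (v w : 'I_n -> R) :
  exists q : {poly R}, forall t, q.[t] = p.@[fun i => v i + w i * t].
Proof.
exists (mmap polyC (fun i => (v i)%:P + (w i)%:P * 'X) p) => t.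
rewrite mevalE horner_sum; apply: eq_bigr => m _.
rewrite hornerM hornerC horner_prod; congr (_ * _); apply: eq_bigr => i _.
by rewrite !hornerE.
Qed.

Lemma mpoly_line_vanishing (R : numDomainType) (n : nat) (p : {mpoly R[n]})
  (v w : 'I_n -> R) (g : {poly R}) :
  g != 0 -> (forall t, g.[t] != 0 -> p.@[fun i => v i + w i * t] = 0) ->
  p.@[v] = 0.
Proof.
move=> g_neq0 p0; have [q qE] := meval_line p v w.
have qg0 : q * g = 0.
  apply: vanishing_poly_eq0 => t; rewrite hornerM.
  by have [->|/p0 pt0] := eqVneq g.[t] 0; rewrite ?mulr0 // qE pt0 mul0r.
have q0 : q = 0 by move/eqP: qg0; rewrite mulf_eq0 (negbTE g_neq0) orbF => /eqP.
rewrite (meval_eq (v2 := fun i => v i + w i * 0)) => [|i].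
  by rewrite -qE q0 horner0.
by rewrite mulr0 addr0.
Qed.

Definition indicator (R : nzSemiRingType) (n : nat) (A : {set 'I_n}) :
  'I_n -> R := fun i => (i \in A)%:R.

Lemma Dset_neq0 (C : numClosedFieldType) (n : nat) (A : {set 'I_n})
  (x : 'I_n -> C) : Dset A x <-> {in A, forall i, x i != 0}.
Proof. exact: (iff_sym (rwP (prodf_neq0 _ _))). Qed.

Lemma Lset_indicator (C : numClosedFieldType) (n : nat) (A : {set 'I_n}) :
  Lset A (indicator C A).
Proof.
split; first by apply/Dset_neq0 => i iA; rewrite /indicator iA oner_eq0.
by move=> i; rewrite inE /indicator => /negbTE ->.
Qed.

Lemma pairing0 (r : nat) (a : 'rV[int]_r) : pairing a 0 = 0.
Proof. by rewrite /pairing big1 // => k _; rewrite mxE mulr0. Qed.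

Lemma pairing_lt0_neq0 (r : nat) (a mu : 'rV[int]_r) :
  pairing a mu < 0 -> mu != 0.
Proof. by apply: contraTneq => ->; rewrite pairing0 ltxx. Qed.

Lemma Xlam_Vset (C : numClosedFieldType) (n r : nat)
  (chis : 'I_n -> 'rV[int]_r) (l : 'rV[int]_r) (x : 'I_n -> C) :
  Xlam chis l x <-> Vset (~: Mset chis l) x.
Proof.
split=> X_x i; first by rewrite !inE -ltNge; apply: X_x.
by move=> li_lt0; apply: X_x; rewrite !inE -ltNge.
Qed.

Lemma Xlam_support (C : numClosedFieldType) (n r : nat)
  (chis : 'I_n -> 'rV[int]_r) (mu : 'rV[int]_r) (x y : 'I_n -> C) :
  (forall i, y i != 0 -> x i != 0) -> Xlam chis mu x -> Xlam chis mu y.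
Proof.
move=> supp_yx X_x i /X_x xi0; apply/eqP; apply: contraT => /supp_yx.
by rewrite xi0 eqxx.
Qed.

Section Stratum.

Variables (C : numClosedFieldType) (n r : nat) (chis : 'I_n -> 'rV[int]_r).
Variables (Q : 'M[int]_r) (chi : 'rV[int]_r).
Hypothesis hQ : integral_inner_product Q.

Local Notation S l := (@Sstrat C n r chis Q chi l).

Lemma gnorm_gt0 mu : mu != 0 -> 0 < Defs.gnorm C Q mu.
Proof. by case: hQ => _ Qpos mu_neq0; rewrite sqrtC_gt0 ltr0z Qpos. Qed.

Lemma kratio_lt0 mu : pairing chi mu < 0 -> kratio C Q chi mu < 0.
Proof.
move=> chimu_lt0; have mu_neq0 := pairing_lt0_neq0 chimu_lt0.
by rewrite /kratio pmulr_llt0 ?invr_gt0 ?gnorm_gt0 ?ltrz0.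
Qed.

Lemma kratio_ge0 mu : 0 <= pairing chi mu -> 0 <= kratio C Q chi mu.
Proof.
have [->|/gnorm_gt0/ltW gnorm_ge0] := eqVneq mu 0.
  by rewrite /kratio pairing0 mul0r.
by move=> chimu_ge0; rewrite divr_ge0 ?ler0z.
Qed.

Lemma Sstrat_pairing_lt0 l x : S l x -> pairing chi l < 0.
Proof.
move=> [[mu [X_mu chimu_lt0]] [_ _ l_min]].
have mu_neq0 := pairing_lt0_neq0 chimu_lt0.
rewrite ltNge; apply/negP => /kratio_ge0 kl_ge0.
have := le_lt_trans (l_min _ mu_neq0 X_mu) (kratio_lt0 chimu_lt0).
by move/lt_geF; rewrite kl_ge0.
Qed.

Lemma Sstrat_support l y x :
  S l y -> (forall i, y i != 0 -> x i != 0) -> Xlam chis l x -> S l x.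
Proof.
move=> Sy supp_yx X_x; have chil_lt0 := Sstrat_pairing_lt0 Sy.
case: Sy => _ [l_indiv _ l_min]; split; first by exists l.
by split=> // mu mu_neq0 /(Xlam_support supp_yx); apply: l_min.
Qed.

Lemma Sstrat_minimal_L l x :
  S l x <-> Xlam chis l x /\
            exists A : {set 'I_n}, minimal_L C chis Q chi l A /\ Dset A x.
Proof.
split=> [Sx | [X_x [A [[LA_S _] /Dset_neq0 A_supp]]]].
- have X_x : Xlam chis l x by case: Sx => _ [].
  split=> //; pose T := [set i | x i != 0].
  have LT_S z : Lset T z -> S l z.
    case=> /Dset_neq0 T_supp T'0; apply: (Sstrat_support Sx).
      by move=> i xi; apply: T_supp; rewrite inE.
    by move=> i /X_x xi0; apply: T'0; rewrite !inE xi0 eqxx.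
  have [A sAT [LA_S A_min]] :=
    ex_minimal_set (P := fun A => forall z, Lset A z -> S l z) LT_S.
  exists A; split; first by split.
  by apply/Dset_neq0 => i /(subsetP sAT); rewrite inE.
- apply: (Sstrat_support (LA_S _ (Lset_indicator C A))) => // i.
  by rewrite /indicator; case: (boolP (i \in A)) => [/A_supp | _]; rewrite ?eqxx.
Qed.

Lemma Sstrat_dense l x0 :
  S l x0 -> forall p : {mpoly C[n]}, (forall x, S l x -> p.@[x] = 0) ->
  forall x, Xlam chis l x -> p.@[x] = 0.
Proof.
move=> Sx0 p p0 x X_x; have X_x0 : Xlam chis l x0 by case: Sx0 => _ [].
pose T := [set i | x0 i != 0].
pose g : {poly C} := \prod_(i in T) ('X + (x i)%:P).
have g_neq0 : g != 0.
  by apply/monic_neq0/monic_prod => i _; apply: monicXaddC.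
apply: (mpoly_line_vanishing (w := indicator C T) g_neq0) => t.
rewrite horner_prod => /prodf_neq0 gt_neq0; apply/p0/(Sstrat_support Sx0).
  move=> i x0i; have iT : i \in T by rewrite inE.
  by rewrite /indicator iT mul1r addrC; move: (gt_neq0 i iT); rewrite !hornerE.
move=> i li_lt0; rewrite /indicator inE (X_x0 _ li_lt0) eqxx mul0r addr0.
exact: X_x.
Qed.

End Stratum.

Theorem theorem3p17 (C : numClosedFieldType) (n r : nat)
  (chis : 'I_n -> 'rV[int]_r) (Q : 'M[int]_r)
  (hQ : integral_inner_product Q) (chi l : 'rV[int]_r)
  (hl : Lambda_set C chis Q chi l) :
  (forall x : 'I_n -> C,
     (Sstrat chis Q chi l x <->
        Vset (~: Mset chis l) x /\
        exists A : {set 'I_n}, minimal_L C chis Q chi l A /\ Dset A x) /\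
     (Sstrat chis Q chi l x <->
        Xlam chis l x /\
        exists A : {set 'I_n}, minimal_L C chis Q chi l A /\ Dset A x)) /\
  (* the Zariski closure of S^chi_lambda is X_lambda *)
  (forall p : {mpoly C[n]},
     (forall x : 'I_n -> C, Sstrat chis Q chi l x -> p.@[x] = 0) ->
     forall x : 'I_n -> C, Xlam chis l x -> p.@[x] = 0).
Proof.
have [x0 Sx0] := hl; have S_dense := Sstrat_dense hQ Sx0.
split=> [x | //]; rewrite -Xlam_Vset.
by split; apply: Sstrat_minimal_L.
Qed.
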